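(* Suppose $\alpha\ge\beta$. Let $(n^{-*},n^{+*})$ be a global optimum of $\max\{\Phi_{w_{\min}}(n^-,n^+): n^-,n^+\in\mathbb{N}\cup\{0\},\ n^-+n^+=N\}$ and suppose the optimal value is positive. Then every global optimum $(w^{-*},w^{+*})$ of $P_{w_{\min}}(n^{-*},n^{+*})$ satisfies $w^{-*}_i=w_{\min}$ for all $i\in\{1,\dots,n^{-*}\}$.
   Context: Lottery with $N\in\mathbb{N}$ tickets, each outcome having probability $1/N$, and a fixed ticket price $-w_{\min}>0$. Parameters $\alpha,\beta\in(0,1)$, $\lambda>0$; value function $U(x)=x^\alpha$ for $x\ge0$, $U(x)=-\lambda(-x)^\beta$ for $x<0$. A function $f:[0,1]\to\mathbb{R}$ is inverse S-shaped if it is strictly increasing, continuously differentiable, and there is $x_0\in[0,1]$ such that $f'$ is strictly decreasing on $[0,x_0]$ and strictly increasing on $[x_0,1]$; $W^+,W^-:[0,1]\to[0,1]$ are inverse S-shaped with value $0$ at $0$ and $1$ at $1$. For $n^-+n^+=N$ let $h^-_i=W^-(i/N)-W^-((i-1)/N)$ ($i\le n^-$), $h^+_j=W^+((n^+-j+1)/N)-W^+((n^+-j)/N)$ ($j\le n^+$). Problem $P_{w_{\min}}(n^-,n^+)$: maximize $\sum_{i=1}^{n^-}(-w^-_i)-\sum_{j=1}^{n^+}w^+_j$ subject to $\sum_ih^-_iU(w^-_i)+\sum_jh^+_jU(w^+_j)\ge0$, $0\le w^+_1\le\cdots\le w^+_{n^+}$, $w_{\min}\le w^-_1\le\cdots\le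 w^-_{n^-}\le0$; $\Phi_{w_{\min}}(n^-,n^+)$ is its optimal value (zero when $n^-=0$ or $n^+=0$). *)

From Stdlib Require Import Reals.
From Coquelicot Require Import Coquelicot.
Open Scope R_scope.

Fixpoint sumR (n : nat) (f : nat -> R) : R :=
  match n with O => 0 | S k => sumR k f + f (S k) end.

Definition has_deriv01 (f : R -> R) (df : R) (x : R) : Prop :=
  limit1_in (fun y => (f y - f x) / (y - x))
            (fun y => 0 <= y <= 1 /\ y <> x) df x.

Definition cont01 (g : R -> R) (x : R) : Prop :=
  limit1_in g (fun y => 0 <= y <= 1) (g x) x.

Definition inverse_S_shaped (f : R -> R) : Prop :=
  (forall x y, 0 <= x <= 1 -> 0 <= y <= 1 -> x < y -> f x < f y) /\
  exists df : R -> R,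
    (forall x, 0 <= x <= 1 -> has_deriv01 f (df x) x) /\
    (forall x, 0 <= x <= 1 -> cont01 df x) /\
    exists x0, 0 <= x0 <= 1 /\
      (forall x y, 0 <= x -> x < y -> y <= x0 -> df y < df x) /\
      (forall x y, x0 <= x -> x < y -> y <= 1 -> df x < df y).

Definition weighting (W : R -> R) : Prop :=
  inverse_S_shaped W /\ W 0 = 0 /\ W 1 = 1 /\
  (forall x, 0 <= x <= 1 -> 0 <= W x <= 1).

Definition U (alpha beta lambda : R) (x : R) : R :=
  if Rlt_dec 0 x then Rpower x alpha
  else if Rlt_dec x 0 then - lambda * Rpower (- x) beta
  else 0.

Definition hminus (Wm : R -> R) (N : nat) (i : nat) : R :=
  Wm (INR i / INR N) - Wm ((INR i - 1) / INR N).

Definition hplus (Wp : R -> R) (N np : nat) (j : nat) : R :=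
  Wp ((INR np - INR j + 1) / INR N) - Wp ((INR np - INR j) / INR N).

(* feasibility for P_{wmin}(nm, np); wm, wp indexed from 1 *)
Definition feasible (N : nat) (wmin alpha beta lambda : R) (Wm Wp : R -> R)
    (nm np : nat) (wm wp : nat -> R) : Prop :=
  sumR nm (fun i => hminus Wm N i * U alpha beta lambda (wm i)) +
  sumR np (fun j => hplus Wp N np j * U alpha beta lambda (wp j)) >= 0 /\
  ((np >= 1)%nat -> 0 <= wp 1%nat) /\
  (forall j, (1 <= j < np)%nat -> wp j <= wp (S j)) /\
  ((nm >= 1)%nat -> wmin <= wm 1%nat /\ wm nm <= 0) /\
  (forall i, (1 <= i < nm)%nat -> wm i <= wm (S i)).

Definition objective (nm np : nat) (wm wp : nat -> R) : R :=
  sumR nm (fun i => - wm i) - sumR np (fun j => wp j).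

Definition is_global_opt N wmin alpha beta lambda Wm Wp nm np wm wp : Prop :=
  feasible N wmin alpha beta lambda Wm Wp nm np wm wp /\
  forall wm' wp', feasible N wmin alpha beta lambda Wm Wp nm np wm' wp' ->
    objective nm np wm' wp' <= objective nm np wm wp.

Definition Phi N wmin alpha beta lambda Wm Wp (nm np : nat) : Rbar :=
  match nm, np with
  | O, _ | _, O => Finite 0
  | _, _ => Lub_Rbar (fun v => exists wm wp,
              feasible N wmin alpha beta lambda Wm Wp nm np wm wp /\
              v = objective nm np wm wp)
  end.

(* Let (w-, w+) be an optimum of P(n-, n+) for an optimal split (n-, n+), let k be the first
   index with w-_k > wmin and mu = w-_k / wmin < 1. Scaling the tail (w-_k, ..., w-_n-) by c >= 0
   and rescaling the gains so that the budget constraint stays tight gives feasible points along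
   a curve through the optimum (c = 1). Concavity of t^alpha and beta <= alpha show that the gain
   multipliers at c = 0 and c = 1/mu, averaged with weights 1 - mu and mu, are at most the
   multiplier 1 of the optimum, so the point c = 0 is at least as good as the optimum; positivity
   of the optimal value then forces k > 1. At c = 0 the last n- - k + 1 losses are 0, and these
   outcomes are better used as small gains e: they buy utility of order e^alpha, which allows all
   other gains to shrink by an amount of the same order, much larger than the price of order e.
   This strictly beats the optimum in the split (k - 1, N - k + 1), contradicting the optimality
   of (n-, n+). *)

From Stdlib Require Import Reals Lra Lia Wf_nat.
From Coquelicot Require Import Coquelicot.
Open Scope R_scope.

(** * Powers *)

(* [Rpower 0 y = 1]; [powr] is the power function extended by 0 on [x <= 0], as in [U]. *)
Definition powr (x y : R) : R := if Rlt_dec 0 x then Rpower x y else 0.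

Lemma powr_Rpower x y : 0 < x -> powr x y = Rpower x y.
Proof. intros Hx; unfold powr; destruct (Rlt_dec 0 x); [reflexivity | lra]. Qed.

Lemma powr_le0 x y : x <= 0 -> powr x y = 0.
Proof. intros Hx; unfold powr; destruct (Rlt_dec 0 x); [lra | reflexivity]. Qed.

Lemma powr_gt0 x y : 0 < x -> 0 < powr x y.
Proof. intros Hx; rewrite powr_Rpower by exact Hx; apply exp_pos. Qed.

Lemma powr_ge0 x y : 0 <= powr x y.
Proof.
  destruct (Rlt_dec 0 x) as [Hx | Hx].
  - left; apply powr_gt0, Hx.
  - rewrite powr_le0 by lra; lra.
Qed.

Lemma powr_one_l y : powr 1 y = 1.
Proof.
  rewrite powr_Rpower by lra; unfold Rpower.
  rewrite ln_1, Rmult_0_r; apply exp_0.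
Qed.

Lemma powr_one_r x : 0 <= x -> powr x 1 = x.
Proof.
  intros [Hx | <-].
  - rewrite powr_Rpower by exact Hx; apply Rpower_1, Hx.
  - apply powr_le0; lra.
Qed.

Lemma powr_mult_distr x y z : 0 <= x -> 0 <= y -> powr (x * y) z = powr x z * powr y z.
Proof.
  intros [Hx | <-] [Hy | <-]; try (rewrite ?Rmult_0_l, ?Rmult_0_r, !(powr_le0 0) by lra; ring).
  rewrite !powr_Rpower by (try apply Rmult_lt_0_compat; assumption).
  symmetry; apply Rpower_mult_distr; assumption.
Qed.

Lemma powr_powr x y z : 0 <= x -> powr (powr x y) z = powr x (y * z).
Proof.
  intros [Hx | <-].
  - rewrite (powr_Rpower x), (powr_Rpower x), powr_Rpower by (try apply exp_pos; exact Hx).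
    apply Rpower_mult.
  - rewrite (powr_le0 0 y), !powr_le0 by lra; reflexivity.
Qed.

Lemma powr_plus x y z : powr x (y + z) = powr x y * powr x z.
Proof.
  destruct (Rlt_dec 0 x) as [Hx | Hx].
  - rewrite !powr_Rpower by exact Hx; apply Rpower_plus.
  - rewrite !powr_le0 by lra; ring.
Qed.

Lemma powr_powr_id x y z : 0 <= x -> y * z = 1 -> powr (powr x y) z = x.
Proof. intros Hx Hyz; rewrite powr_powr, Hyz by exact Hx; apply powr_one_r, Hx. Qed.

Lemma powr_le_compat x1 x2 y : 0 <= y -> 0 <= x1 <= x2 -> powr x1 y <= powr x2 y.
Proof.
  intros Hy [[Hx1 | <-] Hx12].
  - rewrite !powr_Rpower by lra; apply Rle_Rpower_l; lra.
  - rewrite powr_le0 by lra; apply powr_ge0.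
Qed.

Lemma powr_le_exp x y1 y2 : 0 <= x <= 1 -> y1 <= y2 -> powr x y2 <= powr x y1.
Proof.
  intros [[Hx | <-] Hx1] Hy.
  - rewrite !powr_Rpower by exact Hx; unfold Rpower.
    assert (ln x <= 0) by (rewrite <- ln_1; apply ln_le; lra).
    assert (Hexp : y2 * ln x <= y1 * ln x) by nra.
    destruct Hexp as [Hlt | ->]; [left; apply exp_increasing, Hlt | lra].
  - rewrite !powr_le0 by lra; lra.
Qed.

Lemma powr_inv_le_self x p : 0 <= x <= 1 -> 0 < p <= 1 -> powr x (/ p) <= x.
Proof.
  intros Hx Hp; rewrite <- (powr_one_r x) at 2 by lra.
  apply powr_le_exp; [lra |]; rewrite <- Rinv_1; apply Rinv_le_contravar; lra.
Qed.

Lemma exp_tangent a x : exp a * (1 + x - a) <= exp x.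
Proof.
  replace (exp x) with (exp a * exp (x - a)) by (rewrite <- exp_plus; f_equal; ring).
  pose proof (exp_ineq1_le (x - a)); pose proof (exp_pos a).
  apply Rmult_le_compat_l; lra.
Qed.

Lemma powr_bernoulli u p : 0 <= u -> 0 <= p <= 1 -> powr u p <= p * u + (1 - p).
Proof.
  intros [Hu | <-] Hp.
  - rewrite powr_Rpower by exact Hu; unfold Rpower.
    pose proof (exp_tangent (p * ln u) (ln u)) as Tu; rewrite exp_ln in Tu by exact Hu.
    pose proof (exp_tangent (p * ln u) 0) as T0; rewrite exp_0 in T0.
    replace (exp (p * ln u)) with
      (p * (exp (p * ln u) * (1 + ln u - p * ln u))
       + (1 - p) * (exp (p * ln u) * (1 + 0 - p * ln u))) by ring.
    nra.
  - rewrite powr_le0 by lra; lra.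
Qed.

Lemma powr_tangent w z p : 0 <= w -> 0 < z -> 0 <= p <= 1 ->
  powr w p <= powr z p * (p * (w / z) + (1 - p)).
Proof.
  intros Hw Hz Hp.
  assert (Hwz : 0 <= w / z) by (apply Rdiv_le_0_compat; assumption).
  replace w with (z * (w / z)) at 1 by (field; lra).
  rewrite powr_mult_distr by lra.
  apply Rmult_le_compat_l; [apply powr_ge0 | apply powr_bernoulli; assumption].
Qed.

Lemma Rmult_powr_eq0 l x p : l * x = 0 -> l * powr x p = 0.
Proof. intros H; destruct (Rmult_integral _ _ H) as [-> | ->]; [ring | rewrite powr_le0; lra]. Qed.

Lemma powr_concave x y l p : 0 <= x -> 0 <= y -> 0 <= l <= 1 -> 0 <= p <= 1 ->
  l * powr x p + (1 - l) * powr y p <= powr (l * x + (1 - l) * y) p.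
Proof.
  intros Hx Hy Hl Hp; set (z := l * x + (1 - l) * y).
  assert (Hz : 0 <= z) by (unfold z; nra).
  destruct Hz as [Hz | Hz].
  - pose proof (powr_tangent x z p Hx Hz Hp) as Tx.
    pose proof (powr_tangent y z p Hy Hz Hp) as Ty.
    assert (Hcomb : l * (p * (x / z) + (1 - p)) + (1 - l) * (p * (y / z) + (1 - p)) = 1)
      by (unfold z in *; field; lra).
    apply Rle_trans with (powr z p * (l * (p * (x / z) + (1 - p)) + (1 - l) * (p * (y / z) + (1 - p))));
      [nra | rewrite Hcomb; lra].
  - rewrite (Rmult_powr_eq0 l x), (Rmult_powr_eq0 (1 - l) y), <- Hz by (unfold z in Hz; nra).
    rewrite powr_le0; lra.
Qed.

Lemma powr_increments_antitone s s' c p : 0 <= s <= s' -> 0 <= c -> 0 <= p <= 1 ->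
  powr (s' + c) p - powr s' p <= powr (s + c) p - powr s p.
Proof.
  intros Hs Hc Hp; set (d := s' - s + c).
  destruct (Req_dec d 0) as [Hd | Hd].
  { replace s' with s by (unfold d in Hd; lra); replace c with 0 by (unfold d in Hd; lra); lra. }
  set (l := c / d).
  assert (Hl : 0 <= l <= 1).
  { unfold l; split; [apply Rdiv_le_0_compat; unfold d in *; lra |].
    apply Rmult_le_reg_r with d; [unfold d in *; lra |]; unfold d in *; field_simplify; lra. }
  pose proof (powr_concave (s' + c) s l p ltac:(lra) ltac:(lra) Hl Hp) as H1.
  pose proof (powr_concave (s' + c) s (1 - l) p ltac:(lra) ltac:(lra) ltac:(lra) Hp) as H2.
  replace (l * (s' + c) + (1 - l) * s) with (s + c) in H1 by (unfold l, d in *; field; lra).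
  replace ((1 - l) * (s' + c) + (1 - (1 - l)) * s) with s' in H2 by (unfold l, d in *; field; lra).
  lra.
Qed.

Lemma powr_mix A B mu p : 0 <= A <= B -> 0 <= mu <= 1 -> 0 <= p <= 1 ->
  powr ((1 - mu) * A + mu * B) p <= (1 - powr mu p) * powr A p + powr mu p * powr B p.
Proof.
  intros HAB Hmu Hp.
  pose proof (powr_increments_antitone (mu * A) A (mu * (B - A)) p ltac:(nra) ltac:(nra) Hp) as H.
  replace (A + mu * (B - A)) with ((1 - mu) * A + mu * B) in H by ring.
  replace (mu * A + mu * (B - A)) with (mu * B) in H by ring.
  rewrite !powr_mult_distr in H by lra.
  lra.
Qed.

(* Applied with [a] the head loss, [a + b] the loss after scaling the tail by [1 / mu] and
   [a + mu^q b] the loss of the optimum: the two powers are then the gain multipliers needed at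
   tail scales 0 and [1 / mu]. *)
Lemma mix_rescaled_le_1 a b mu p q : 0 <= a -> 0 <= b -> 0 <= mu <= 1 -> 0 <= q <= p -> 0 < p <= 1 ->
  0 < a + powr mu q * b ->
  (1 - mu) * powr (a / (a + powr mu q * b)) (/ p)
  + mu * powr ((a + b) / (a + powr mu q * b)) (/ p) <= 1.
Proof.
  intros Ha Hb Hmu Hqp Hp HS; set (S := a + powr mu q * b) in *.
  set (A := powr (a / S) (/ p)); set (B := powr ((a + b) / S) (/ p)).
  assert (Hp' : 0 <= / p) by (left; apply Rinv_0_lt_compat; lra).
  assert (HaS : 0 <= a / S) by (apply Rdiv_le_0_compat; lra).
  assert (HabS : a / S <= (a + b) / S) by (apply Rmult_le_compat_r; [left; apply Rinv_0_lt_compat |]; lra).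
  assert (HAB : 0 <= A <= B) by (split; [apply powr_ge0 | apply powr_le_compat; lra]).
  assert (HApow : powr A p = a / S) by (apply powr_powr_id; [lra | field; lra]).
  assert (HBpow : powr B p = (a + b) / S) by (apply powr_powr_id; [lra | field; lra]).
  pose proof (powr_mix A B mu p HAB Hmu ltac:(lra)) as Hmix.
  rewrite HApow, HBpow in Hmix.
  assert (Hmup : powr mu p <= powr mu q) by (apply powr_le_exp; lra).
  assert (Hle : powr ((1 - mu) * A + mu * B) p <= 1).
  { apply Rle_trans with (1 := Hmix).
    replace ((1 - powr mu p) * (a / S) + powr mu p * ((a + b) / S)) with ((a + powr mu p * b) / S)
      by (field; lra).
    apply Rmult_le_reg_r with S; [lra |].
    replace ((a + powr mu p * b) / S * S) with (a + powr mu p * b) by (field; lra).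
    unfold S; nra. }
  rewrite <- (powr_powr_id ((1 - mu) * A + mu * B) p (/ p)) by (try field; nra).
  rewrite <- (powr_one_l (/ p)) at 2.
  apply powr_le_compat; [assumption | split; [apply powr_ge0 | exact Hle]].
Qed.

Lemma chord_endpoint_ge T Y mu c1 c2 : 0 < mu < 1 -> 0 <= Y -> (1 - mu) * c1 + mu * c2 <= 1 ->
  / mu * T - c2 * Y <= T - Y -> T - Y <= - (c1 * Y).
Proof.
  intros Hmu HY Hmix Hmid.
  apply Rmult_le_compat_l with (r := mu) in Hmid; [| lra].
  replace (mu * (/ mu * T - c2 * Y)) with (T - mu * c2 * Y) in Hmid by (field; lra).
  apply Rmult_le_reg_l with (1 - mu); nra.
Qed.

Lemma exists_small_pos p q K1 K2 : 0 < p -> 0 < q -> 0 < K1 -> 0 < K2 ->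
  exists e, 0 < e /\ powr e p < K1 /\ powr e q <= K2.
Proof.
  intros Hp Hq HK1 HK2.
  set (e1 := powr (K1 / 2) (/ p)); set (e2 := powr K2 (/ q)).
  assert (He1 : 0 < e1) by (apply powr_gt0; lra).
  assert (He2 : 0 < e2) by (apply powr_gt0; lra).
  exists (Rmin e1 e2); split; [apply Rmin_pos; assumption | split].
  - apply Rle_lt_trans with (powr e1 p).
    + apply powr_le_compat; [lra | split; [apply Rlt_le, Rmin_pos; assumption | apply Rmin_l]].
    + unfold e1; rewrite powr_powr_id by (try field; lra); lra.
  - apply Rle_trans with (powr e2 q).
    + apply powr_le_compat; [lra | split; [apply Rlt_le, Rmin_pos; assumption | apply Rmin_r]].
    + unfold e2; rewrite powr_powr_id by (try field; lra); lra.
Qed.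

(** * Finite sums *)

Lemma sumR_ext n f g : (forall i, (1 <= i <= n)%nat -> f i = g i) -> sumR n f = sumR n g.
Proof.
  induction n as [| n IH]; intros H; simpl; [reflexivity |].
  rewrite IH, (H (S n)) by (intros; try apply H; lia); reflexivity.
Qed.

Lemma sumR_plus n f g : sumR n (fun i => f i + g i) = sumR n f + sumR n g.
Proof. induction n as [| n IH]; simpl; [ring | rewrite IH; ring]. Qed.

Lemma sumR_scal n c f : sumR n (fun i => c * f i) = c * sumR n f.
Proof. induction n as [| n IH]; simpl; [ring | rewrite IH; ring]. Qed.

Lemma sumR_const n c : sumR n (fun _ => c) = INR n * c.
Proof. induction n as [| n IH]; simpl sumR; [simpl; ring | rewrite IH, S_INR; ring]. Qed.

Lemma sumR_le n f g : (forall i, (1 <= i <= n)%nat -> f i <= g i) -> sumR n f <= sumR n g.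
Proof.
  induction n as [| n IH]; intros H; simpl; [lra |].
  apply Rplus_le_compat; [apply IH; intros |]; apply H; lia.
Qed.

Lemma sumR_nonneg n f : (forall i, (1 <= i <= n)%nat -> 0 <= f i) -> 0 <= sumR n f.
Proof. intros H; rewrite <- (Rmult_0_r (INR n)), <- sumR_const; apply sumR_le, H. Qed.

Lemma sumR_ge_term n f i : (forall i, (1 <= i <= n)%nat -> 0 <= f i) -> (1 <= i <= n)%nat ->
  f i <= sumR n f.
Proof.
  induction n as [| n IH]; intros H Hi; simpl; [lia |].
  destruct (Nat.eq_dec i (S n)) as [-> | Hne].
  - pose proof (sumR_nonneg n f ltac:(intros; apply H; lia)); lra.
  - pose proof (IH ltac:(intros; apply H; lia) ltac:(lia)); pose proof (H (S n) ltac:(lia)); lra.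
Qed.

Lemma sumR_split m n f : sumR (m + n) f = sumR m f + sumR n (fun j => f (j + m)%nat).
Proof.
  induction n as [| n IH]; simpl; [rewrite Nat.add_0_r; ring |].
  rewrite Nat.add_succ_r; simpl; rewrite IH, (Nat.add_comm n m); ring.
Qed.

Lemma sumR_zero_tail m r f : (forall i, (m < i <= m + r)%nat -> f i = 0) -> sumR (m + r) f = sumR m f.
Proof.
  intros Hz; rewrite sumR_split, (sumR_ext r _ (fun _ => 0)), sumR_const by (intros; apply Hz; lia).
  ring.
Qed.

Lemma sumR_cut m n f g : (m <= n)%nat ->
  sumR n (fun i => if (i <=? m)%nat then f i else g i) = sumR m f + (sumR n g - sumR m g).
Proof.
  intros Hmn; replace n with (m + (n - m))%nat by lia; rewrite !sumR_split.
  rewrite (sumR_ext m _ f) by (intros i Hi; destruct (Nat.leb_spec i m); [reflexivity | lia]).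
  rewrite (sumR_ext (n - m) _ (fun j => g (j + m)%nat))
    by (intros j Hj; destruct (Nat.leb_spec (j + m) m); [lia | reflexivity]).
  ring.
Qed.

Lemma chain_le n (w : nat -> R) : (forall j, (1 <= j < n)%nat -> w j <= w (S j)) ->
  forall i j, (1 <= i <= j)%nat -> (j <= n)%nat -> w i <= w j.
Proof.
  intros H i j Hij Hjn; induction j as [| j IH]; [lia |].
  destruct (Nat.eq_dec i (S j)) as [-> | Hne]; [lra |].
  apply Rle_trans with (w j); [apply IH | apply H]; lia.
Qed.

(** * Decision weights, values and feasibility *)

Lemma weight_increment_pos W N x : weighting W -> 1 <= x <= INR N ->
  0 < W (x / INR N) - W ((x - 1) / INR N).
Proof.
  intros [[Hinc _] _] Hx.
  assert (HN : 0 < INR N) by lra.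
  assert (Hunit : forall z, 0 <= z <= INR N -> 0 <= z / INR N <= 1).
  { intros z Hz; split; [apply Rdiv_le_0_compat; lra |].
    apply Rmult_le_reg_r with (INR N); [lra |]; field_simplify; lra. }
  apply Rlt_0_minus, Hinc; try (apply Hunit; lra).
  apply Rmult_lt_compat_r; [apply Rinv_0_lt_compat |]; lra.
Qed.

Lemma hminus_pos Wm N i : weighting Wm -> (1 <= i <= N)%nat -> 0 < hminus Wm N i.
Proof.
  intros HW Hi; apply weight_increment_pos; [exact HW |].
  split; [apply (le_INR 1) | apply le_INR]; lia.
Qed.

Lemma hplus_pos Wp N np j : weighting Wp -> (np <= N)%nat -> (1 <= j <= np)%nat ->
  0 < hplus Wp N np j.
Proof.
  intros HW Hnp Hj; unfold hplus.
  replace (INR np - INR j) with (INR np - INR j + 1 - 1) at 2 by ring.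
  apply weight_increment_pos; [exact HW |].
  pose proof (le_INR 1 j ltac:(lia)); pose proof (le_INR j np ltac:(lia)); pose proof (le_INR np N Hnp).
  simpl in *; lra.
Qed.

Lemma hplus_shift Wp N r np j : hplus Wp N (r + np) (j + r) = hplus Wp N np j.
Proof. unfold hplus; rewrite !plus_INR; do 2 f_equal; f_equal; ring. Qed.

Lemma U_nonpos alpha beta lambda w : w <= 0 -> U alpha beta lambda w = - lambda * powr (- w) beta.
Proof.
  intros Hw; unfold U.
  destruct (Rlt_dec 0 w) as [? | _]; [lra |].
  destruct (Rlt_dec w 0) as [Hlt | Hge].
  - rewrite powr_Rpower by lra; reflexivity.
  - rewrite powr_le0 by lra; ring.
Qed.

Lemma U_nonneg alpha beta lambda w : 0 <= w -> U alpha beta lambda w = powr w alpha.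
Proof.
  intros Hw; unfold U.
  destruct (Rlt_dec 0 w) as [Hlt | Hge].
  - rewrite powr_Rpower by exact Hlt; reflexivity.
  - destruct (Rlt_dec w 0); [lra |]; rewrite powr_le0 by lra; reflexivity.
Qed.

Lemma objective_le_Phi N wmin alpha beta lambda Wm Wp nm np wm wp : (1 <= nm)%nat -> (1 <= np)%nat ->
  feasible N wmin alpha beta lambda Wm Wp nm np wm wp ->
  Rbar_le (objective nm np wm wp) (Phi N wmin alpha beta lambda Wm Wp nm np).
Proof.
  intros Hnm Hnp Hf; destruct nm as [| nm]; [lia |]; destruct np as [| np]; [lia |].
  apply (Lub_Rbar_correct _); eauto.
Qed.

Lemma Phi_le_opt N wmin alpha beta lambda Wm Wp nm np wm wp : (1 <= nm)%nat -> (1 <= np)%nat ->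
  is_global_opt N wmin alpha beta lambda Wm Wp nm np wm wp ->
  Rbar_le (Phi N wmin alpha beta lambda Wm Wp nm np) (objective nm np wm wp).
Proof.
  intros Hnm Hnp [_ Hmax]; destruct nm as [| nm]; [lia |]; destruct np as [| np]; [lia |].
  apply (Lub_Rbar_correct _); intros v (wm' & wp' & Hf & ->); apply Hmax, Hf.
Qed.

Section Lottery.

Variables (N : nat) (wmin alpha beta lambda : R) (Wm Wp : R -> R).
Hypotheses (Hwmin : wmin < 0) (Halpha : 0 < alpha < 1) (Hbeta : 0 < beta) (Hab : beta <= alpha)
  (Hlambda : 0 < lambda) (HWm : weighting Wm) (HWp : weighting Wp).

Local Notation feas := (feasible N wmin alpha beta lambda Wm Wp).

Definition loss_value (nm : nat) (wm : nat -> R) : R :=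
  lambda * sumR nm (fun i => hminus Wm N i * powr (- wm i) beta).

Definition gain_value (np : nat) (wp : nat -> R) : R :=
  sumR np (fun j => hplus Wp N np j * powr (wp j) alpha).

Lemma prospect_value_eq nm np wm wp :
  (forall i, (1 <= i <= nm)%nat -> wm i <= 0) -> (forall j, (1 <= j <= np)%nat -> 0 <= wp j) ->
  sumR nm (fun i => hminus Wm N i * U alpha beta lambda (wm i)) +
  sumR np (fun j => hplus Wp N np j * U alpha beta lambda (wp j))
  = gain_value np wp - loss_value nm wm.
Proof.
  intros Hm Hp; unfold loss_value, gain_value.
  rewrite (sumR_ext nm _ (fun i => - lambda * (hminus Wm N i * powr (- wm i) beta)))
    by (intros i Hi; rewrite U_nonpos by (apply Hm; exact Hi); ring).
  rewrite (sumR_ext np _ (fun j => hplus Wp N np j * powr (wp j) alpha))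
    by (intros j Hj; rewrite U_nonneg by (apply Hp; exact Hj); reflexivity).
  rewrite sumR_scal; ring.
Qed.

Lemma feasible_intro nm np wm wp :
  (forall i, (1 <= i <= nm)%nat -> wmin <= wm i <= 0) ->
  (forall i, (1 <= i < nm)%nat -> wm i <= wm (S i)) ->
  (forall j, (1 <= j <= np)%nat -> 0 <= wp j) ->
  (forall j, (1 <= j < np)%nat -> wp j <= wp (S j)) ->
  loss_value nm wm <= gain_value np wp ->
  feas nm np wm wp.
Proof.
  intros Hm Hmm Hp Hmp Hlg; unfold feasible.
  rewrite prospect_value_eq by (intros; try apply Hm; try apply Hp; assumption).
  repeat split; try (intros; apply Hm || apply Hp); try lia; try assumption; lra.
Qed.

Lemma feasible_elim nm np wm wp : feas nm np wm wp ->
  (forall i, (1 <= i <= nm)%nat -> wmin <= wm i <= 0) /\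
  (forall i, (1 <= i < nm)%nat -> wm i <= wm (S i)) /\
  (forall j, (1 <= j <= np)%nat -> 0 <= wp j) /\
  (forall j, (1 <= j < np)%nat -> wp j <= wp (S j)) /\
  loss_value nm wm <= gain_value np wp.
Proof.
  intros (Hval & Hp1 & Hmp & Hm1 & Hmm).
  assert (Hm : forall i, (1 <= i <= nm)%nat -> wmin <= wm i <= 0).
  { intros i Hi; destruct (Hm1 ltac:(lia)) as [Hlo Hhi]; split.
    - apply Rle_trans with (wm 1%nat); [exact Hlo | apply (chain_le nm); auto; lia].
    - apply Rle_trans with (wm nm); [apply (chain_le nm); auto; lia | exact Hhi]. }
  assert (Hp : forall j, (1 <= j <= np)%nat -> 0 <= wp j).
  { intros j Hj; apply Rle_trans with (wp 1%nat); [apply Hp1; lia | apply (chain_le np); auto; lia]. }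
  rewrite prospect_value_eq in Hval by (intros; try apply Hm; try apply Hp; assumption).
  repeat split; auto; try (apply Hm; assumption); lra.
Qed.

Lemma gain_value_scale np wp c : 0 <= c -> (forall j, (1 <= j <= np)%nat -> 0 <= wp j) ->
  gain_value np (fun j => c * wp j) = powr c alpha * gain_value np wp.
Proof.
  intros Hc Hp; unfold gain_value; rewrite <- sumR_scal; apply sumR_ext.
  intros j Hj; rewrite powr_mult_distr by auto; ring.
Qed.

Lemma loss_term_nonneg w i : (1 <= i <= N)%nat -> 0 <= hminus Wm N i * powr (- w i) beta.
Proof. intros Hi; apply Rmult_le_pos; [left; apply hminus_pos | apply powr_ge0]; auto. Qed.

Lemma loss_value_pos nm w k : (nm <= N)%nat -> (1 <= k <= nm)%nat -> w k < 0 ->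
  0 < loss_value nm w.
Proof.
  intros HnmN Hk Hwk; unfold loss_value; apply Rmult_lt_0_compat; [exact Hlambda |].
  apply Rlt_le_trans with (hminus Wm N k * powr (- w k) beta).
  - apply Rmult_lt_0_compat; [apply hminus_pos; auto; lia | apply powr_gt0; lra].
  - apply (sumR_ge_term nm (fun i => hminus Wm N i * powr (- w i) beta)); [| exact Hk].
    intros i Hi; apply loss_term_nonneg; lia.
Qed.

Lemma loss_value_nonneg nm w : (nm <= N)%nat -> 0 <= loss_value nm w.
Proof.
  intros HnmN; unfold loss_value; apply Rmult_le_pos; [lra |].
  apply sumR_nonneg; intros i Hi; apply loss_term_nonneg; lia.
Qed.

Lemma loss_value_le_prefix m nm w : (m <= nm)%nat -> (nm <= N)%nat ->
  loss_value m w <= loss_value nm w.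
Proof.
  intros Hm HnmN; unfold loss_value.
  replace nm with (m + (nm - m))%nat by lia; rewrite sumR_split.
  apply Rmult_le_compat_l; [lra |].
  assert (0 <= sumR (nm - m) (fun j => hminus Wm N (j + m) * powr (- w (j + m)%nat) beta)); [| lra].
  apply sumR_nonneg; intros j Hj; apply loss_term_nonneg; lia.
Qed.

(** * Scaling the tail of the losses *)

Definition tail_scale (m : nat) (c : R) (w : nat -> R) (i : nat) : R :=
  if (i <=? m)%nat then w i else c * w i.

Lemma objective_tail_scale nm np m c c' w wp : (m <= nm)%nat ->
  objective nm np (tail_scale m c w) (fun j => c' * wp j)
  = sumR m (fun i => - w i) + c * (sumR nm (fun i => - w i) - sumR m (fun i => - w i))
    - c' * sumR np wp.
Proof.
  intros Hm; unfold objective, tail_scale.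
  rewrite (sumR_ext nm _ (fun i => if (i <=? m)%nat then - w i else c * - w i))
    by (intros i Hi; destruct (i <=? m)%nat; ring).
  rewrite sumR_cut, !sumR_scal by exact Hm; ring.
Qed.

Lemma loss_value_tail_scale nm m c w : (m <= nm)%nat -> 0 <= c ->
  (forall i, (1 <= i <= nm)%nat -> w i <= 0) ->
  loss_value nm (tail_scale m c w)
  = loss_value m w + powr c beta * (loss_value nm w - loss_value m w).
Proof.
  intros Hm Hc Hw; unfold loss_value, tail_scale.
  rewrite (sumR_ext nm _ (fun i => if (i <=? m)%nat then hminus Wm N i * powr (- w i) beta
                                   else powr c beta * (hminus Wm N i * powr (- w i) beta))).
  - rewrite sumR_cut, !sumR_scal by exact Hm; ring.
  - intros i Hi; destruct (i <=? m)%nat; [reflexivity |].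
    replace (- (c * w i)) with (c * - w i) by ring.
    rewrite powr_mult_distr; [ring | exact Hc | pose proof (Hw i Hi); lra].
Qed.

Lemma feasible_tail_scale nm np m c c' w wp : feas nm np w wp -> (m < nm)%nat ->
  (forall i, (1 <= i <= m)%nat -> w i = wmin) -> 0 <= c -> wmin <= c * w (S m) -> 0 <= c' ->
  loss_value nm (tail_scale m c w) <= powr c' alpha * loss_value nm w ->
  feas nm np (tail_scale m c w) (fun j => c' * wp j).
Proof.
  intros Hf Hm Hhead Hc Hcw Hc' Hloss.
  destruct (feasible_elim _ _ _ _ Hf) as (Hb & Hmono & Hp & Hpmono & Hlg).
  assert (Htail : forall i, (m < i <= nm)%nat -> wmin <= c * w i).
  { intros i Hi; pose proof (chain_le nm w Hmono (S m) i ltac:(lia) ltac:(lia)); nra. }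
  apply feasible_intro; unfold tail_scale.
  - intros i Hi; destruct (Nat.leb_spec i m); [apply Hb, Hi |].
    pose proof (Htail i ltac:(lia)); pose proof (Hb i Hi); nra.
  - intros i Hi; destruct (Nat.leb_spec i m), (Nat.leb_spec (S i) m); try lia.
    + apply Hmono; lia.
    + replace (S i) with (S m) by lia; rewrite (Hhead i) by lia; exact Hcw.
    + pose proof (Hmono i ltac:(lia)); nra.
  - intros j Hj; pose proof (Hp j Hj); nra.
  - intros j Hj; pose proof (Hpmono j Hj); nra.
  - unfold tail_scale in Hloss; rewrite gain_value_scale by auto.
    pose proof (powr_ge0 c' alpha); nra.
Qed.

Lemma feasible_tail_rescale nm np m c w wp : feas nm np w wp -> (nm <= N)%nat -> (m < nm)%nat ->
  (forall i, (1 <= i <= m)%nat -> w i = wmin) -> 0 <= c -> wmin <= c * w (S m) ->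
  0 < loss_value nm w ->
  feas nm np (tail_scale m c w)
    (fun j => powr (loss_value nm (tail_scale m c w) / loss_value nm w) (/ alpha) * wp j).
Proof.
  intros Hf HnmN Hm Hhead Hc Hcw HS.
  pose proof (loss_value_nonneg nm (tail_scale m c w) HnmN).
  apply feasible_tail_scale; auto; [apply powr_ge0 |].
  rewrite powr_powr_id by (try apply Rdiv_le_0_compat; try field; lra).
  right; field; lra.
Qed.

Lemma zero_tail_no_worse_neg nm np m w wp :
  is_global_opt N wmin alpha beta lambda Wm Wp nm np w wp -> (nm <= N)%nat -> (m < nm)%nat ->
  (forall i, (1 <= i <= m)%nat -> w i = wmin) -> wmin < w (S m) < 0 ->
  exists c, feas nm np (tail_scale m 0 w) (fun j => c * wp j) /\
            objective nm np w wp <= objective nm np (tail_scale m 0 w) (fun j => c * wp j).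
Proof.
  intros [Hf Hmax] HnmN Hm Hhead HwS.
  destruct (feasible_elim _ _ _ _ Hf) as (Hb & _ & Hp & _ & _).
  assert (Hw : forall i, (1 <= i <= nm)%nat -> w i <= 0) by (intros i Hi; apply Hb, Hi).
  set (La := loss_value m w); set (L := loss_value nm w).
  assert (HLa : 0 <= La <= L) by (split; [apply loss_value_nonneg | apply loss_value_le_prefix]; lia).
  assert (HL : 0 < L) by (apply (loss_value_pos _ _ (S m)); [lia | lia | lra]).
  set (mu := w (S m) / wmin).
  assert (Hmuw : w (S m) = mu * wmin) by (unfold mu; field; lra).
  assert (Hmu : 0 < mu < 1) by (split; nra).
  assert (Hmu' : 0 <= / mu) by (apply Rlt_le, Rinv_0_lt_compat; lra).
  set (b := powr (/ mu) beta * (L - La)).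
  assert (Hb0 : 0 <= b) by (pose proof (powr_ge0 (/ mu) beta); unfold b; nra).
  assert (HabL : La + powr mu beta * b = L).
  { unfold b; rewrite <- Rmult_assoc, <- powr_mult_distr, Rinv_r, powr_one_l by lra; ring. }
  pose proof (feasible_tail_rescale nm np m 0 w wp Hf HnmN Hm Hhead ltac:(lra) ltac:(lra) HL) as Hf1.
  pose proof (feasible_tail_rescale nm np m (/ mu) w wp Hf HnmN Hm Hhead Hmu'
                ltac:(rewrite Hmuw, <- Rmult_assoc, Rinv_l; lra) HL) as Hf2.
  rewrite !loss_value_tail_scale in Hf1, Hf2 by (first [lia | exact Hw | lra]).
  rewrite (powr_le0 0 beta) in Hf1 by lra.
  fold La L b in Hf1, Hf2; replace (La + 0 * (L - La)) with La in Hf1 by ring.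
  eexists; split; [exact Hf1 |].
  pose proof (Hmax _ _ Hf2) as Hopt2.
  assert (HV : objective nm np w wp = objective nm np (tail_scale m 1 w) (fun j => 1 * wp j))
    by (rewrite objective_tail_scale by lia; unfold objective; change (fun j => wp j) with wp; ring).
  rewrite HV, !objective_tail_scale in * by lia.
  set (Hd := sumR m (fun i => - w i)) in *; set (Tl := sumR nm (fun i => - w i) - Hd) in *.
  set (Y := sumR np wp) in *; assert (HY : 0 <= Y) by (apply sumR_nonneg; exact Hp).
  set (c1 := powr (La / L) (/ alpha)); set (c2 := powr ((La + b) / L) (/ alpha)) in *.
  pose proof (mix_rescaled_le_1 La b mu alpha beta ltac:(lra) Hb0 ltac:(lra) ltac:(lra) ltac:(lra)
                ltac:(lra)) as Hmix.
  rewrite HabL in Hmix; fold c1 c2 in Hmix.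
  pose proof (chord_endpoint_ge Tl Y mu c1 c2 Hmu HY Hmix ltac:(lra)); lra.
Qed.

Lemma zero_tail_no_worse_zero nm np m w wp :
  feas nm np w wp -> (nm <= N)%nat -> (m < nm)%nat ->
  (forall i, (1 <= i <= m)%nat -> w i = wmin) -> w (S m) = 0 ->
  feas nm np (tail_scale m 0 w) (fun j => 1 * wp j) /\
  objective nm np w wp <= objective nm np (tail_scale m 0 w) (fun j => 1 * wp j).
Proof.
  intros Hf HnmN Hm Hhead HwS.
  destruct (feasible_elim _ _ _ _ Hf) as (Hb & Hmono & _ & _ & _).
  assert (Hw : forall i, (1 <= i <= nm)%nat -> w i <= 0) by (intros i Hi; apply Hb, Hi).
  split.
  - apply feasible_tail_scale; auto; try lra.
    rewrite loss_value_tail_scale, powr_le0, powr_one_l by (first [lia | exact Hw | lra]).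
    assert (loss_value m w <= loss_value nm w) by (apply loss_value_le_prefix; lia); lra.
  - rewrite objective_tail_scale by lia; unfold objective; change (fun j => wp j) with wp.
    assert (Hcut : sumR nm (fun i => - w i) <= sumR nm (fun i => if (i <=? m)%nat then - w i else 0)).
    { apply sumR_le; intros i Hi; destruct (Nat.leb_spec i m); [lra |].
      pose proof (chain_le nm w Hmono (S m) i ltac:(lia) ltac:(lia)); lra. }
    rewrite sumR_cut, !sumR_const in Hcut by lia; lra.
Qed.


(** * Turning zero losses into gains *)

Definition shift_gains (r : nat) (e t : R) (y : nat -> R) (j : nat) : R :=
  if (j <=? r)%nat then e else e + t * y (j - r)%nat.

Lemma shift_gains_nonneg_nondecr r np e t y : 0 <= e -> 0 <= t ->
  (forall j, (1 <= j <= np)%nat -> 0 <= y j) -> (forall j, (1 <= j < np)%nat -> y j <= y (S j)) ->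
  (forall j, (1 <= j <= r + np)%nat -> 0 <= shift_gains r e t y j) /\
  (forall j, (1 <= j < r + np)%nat -> shift_gains r e t y j <= shift_gains r e t y (S j)).
Proof.
  intros He Ht Hy Hmono; unfold shift_gains; split; intros j Hj.
  - destruct (Nat.leb_spec j r); [lra |].
    pose proof (Hy (j - r)%nat ltac:(lia)); nra.
  - destruct (Nat.leb_spec j r), (Nat.leb_spec (S j) r); try lia; [lra | |].
    + pose proof (Hy (S j - r)%nat ltac:(lia)); nra.
    + replace (S j - r)%nat with (S (j - r)) by lia; pose proof (Hmono (j - r)%nat ltac:(lia)); nra.
Qed.

Lemma sumR_shift_gains r np e t y :
  sumR (r + np) (shift_gains r e t y) = INR (r + np) * e + t * sumR np y.
Proof.
  unfold shift_gains; rewrite sumR_split.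
  rewrite (sumR_ext r _ (fun _ => e)) by (intros j Hj; destruct (Nat.leb_spec j r); [reflexivity | lia]).
  rewrite (sumR_ext np _ (fun j => e + t * y j)).
  - rewrite sumR_plus, sumR_scal, !sumR_const, plus_INR; ring.
  - intros j Hj; destruct (Nat.leb_spec (j + r) r); [lia |].
    rewrite Nat.add_sub; reflexivity.
Qed.

Lemma gain_value_shift_gains r np e t y : (1 <= r)%nat -> (r + np <= N)%nat -> 0 <= e -> 0 <= t ->
  (forall j, (1 <= j <= np)%nat -> 0 <= y j) ->
  hplus Wp N (r + np) 1 * powr e alpha + powr t alpha * gain_value np y
  <= gain_value (r + np) (shift_gains r e t y).
Proof.
  intros Hr HrN He Ht Hy; unfold gain_value; rewrite sumR_split.
  apply Rplus_le_compat.
  - replace (powr e alpha) with (powr (shift_gains r e t y 1) alpha)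
      by (unfold shift_gains; destruct (Nat.leb_spec 1 r); [reflexivity | lia]).
    apply (sumR_ge_term r (fun j => hplus Wp N (r + np) j * powr (shift_gains r e t y j) alpha));
      [| lia].
    intros j Hj; apply Rmult_le_pos; [left; apply hplus_pos; auto; lia | apply powr_ge0].
  - rewrite <- sumR_scal; apply sumR_le; intros j Hj.
    rewrite hplus_shift; unfold shift_gains.
    destruct (Nat.leb_spec (j + r) r); [lia |]; rewrite Nat.add_sub.
    pose proof (hplus_pos Wp N np j HWp ltac:(lia) Hj); pose proof (Hy j Hj).
    assert (powr t alpha * powr (y j) alpha <= powr (e + t * y j) alpha).
    { rewrite <- powr_mult_distr by lra; apply powr_le_compat; nra. }
    nra.
Qed.

Lemma sumR_pos_of_gain np y : (forall j, (1 <= j <= np)%nat -> 0 <= y j) ->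
  0 < gain_value np y -> 0 < sumR np y.
Proof.
  intros Hy Hg; destruct (Rlt_le_dec 0 (sumR np y)) as [Hpos | Hle]; [exact Hpos | exfalso].
  assert (Hzero : forall j, (1 <= j <= np)%nat -> y j = 0).
  { intros j Hj; pose proof (sumR_ge_term np y j Hy Hj); pose proof (Hy j Hj); lra. }
  unfold gain_value in Hg.
  rewrite (sumR_ext np _ (fun _ => 0)), sumR_const in Hg
    by (intros j Hj; rewrite Hzero, powr_le0 by (auto; lra); ring).
  lra.
Qed.

Lemma gain_transfer r np T y : (1 <= r)%nat -> (r + np <= N)%nat -> 0 < T ->
  (forall j, (1 <= j <= np)%nat -> 0 <= y j) -> (forall j, (1 <= j < np)%nat -> y j <= y (S j)) ->
  T <= gain_value np y ->
  exists y', (forall j, (1 <= j <= r + np)%nat -> 0 <= y' j) /\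
    (forall j, (1 <= j < r + np)%nat -> y' j <= y' (S j)) /\
    T <= gain_value (r + np) y' /\ sumR (r + np) y' < sumR np y.
Proof.
  intros Hr HrN HT Hy Hmono Hgain.
  set (Y := sumR np y); set (h := hplus Wp N (r + np) 1); set (n := INR (r + np)).
  assert (HY : 0 < Y) by (apply sumR_pos_of_gain; auto; lra).
  assert (Hh : 0 < h) by (apply hplus_pos; auto; lia).
  assert (Hn : 0 < n) by (apply lt_0_INR; lia).
  (* [e ^ (1 - alpha)] small makes the cost [n e] negligible against the bought utility
     [h e ^ alpha]; [e ^ alpha <= T / h] keeps the shrink factor [u] nonnegative. *)
  destruct (exists_small_pos (1 - alpha) alpha (h * Y / (T * n)) (T / h)) as (e & He & He1 & He2);
    try lra; try (apply Rdiv_lt_0_compat; try apply Rmult_lt_0_compat; lra).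
  set (u := 1 - h * powr e alpha / T).
  assert (Hu : 0 <= u <= 1).
  { apply Rmult_le_compat_l with (r := h) in He2; [| lra].
    replace (h * (T / h)) with T in He2 by (field; lra).
    assert (0 <= h * powr e alpha / T <= 1); [| unfold u; lra].
    split; [apply Rdiv_le_0_compat; [pose proof (powr_ge0 e alpha); nra | lra] |].
    apply Rmult_le_reg_r with T; [lra |].
    replace (h * powr e alpha / T * T) with (h * powr e alpha) by (field; lra); lra. }
  set (t := powr u (/ alpha)).
  assert (Htu : powr t alpha = u) by (apply powr_powr_id; [lra | field; lra]).
  assert (Ht : 0 <= t <= u) by (split; [apply powr_ge0 | apply powr_inv_le_self; lra]).
  destruct (shift_gains_nonneg_nondecr r np e t y ltac:(lra) ltac:(lra) Hy Hmono) as [Hy'0 Hy'mono].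
  exists (shift_gains r e t y); split; [exact Hy'0 | split; [exact Hy'mono | split]].
  - apply Rle_trans with (2 := gain_value_shift_gains r np e t y Hr HrN ltac:(lra) ltac:(lra) Hy).
    rewrite Htu; fold h.
    replace T with (h * powr e alpha + u * T) at 1 by (unfold u; field; lra).
    apply Rplus_le_compat_l, Rmult_le_compat_l; lra.
  - rewrite sumR_shift_gains; fold n Y.
    assert (Hsplit : e = powr e alpha * powr e (1 - alpha))
      by (rewrite <- powr_plus, Rplus_minus, powr_one_r; lra).
    assert (Hea : 0 < powr e alpha) by (apply powr_gt0, He).
    assert (n * e < h * powr e alpha * Y / T).
    { rewrite Hsplit at 1; apply Rmult_lt_compat_l with (r := n * powr e alpha) in He1; [| nra].
      replace (n * powr e alpha * (h * Y / (T * n))) with (h * powr e alpha * Y / T) in He1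
        by (field; lra).
      lra. }
    assert (t * Y <= u * Y) by nra.
    unfold u in *; replace ((1 - h * powr e alpha / T) * Y) with (Y - h * powr e alpha * Y / T) in *
      by (field; lra).
    lra.
Qed.

Lemma transfer_zero_losses m r np w y : feas (m + r) np w y -> (1 <= r)%nat -> (m + r + np <= N)%nat ->
  (forall i, (m < i <= m + r)%nat -> w i = 0) -> 0 < loss_value m w ->
  exists y', feas m (r + np) w y' /\ objective (m + r) np w y < objective m (r + np) w y'.
Proof.
  intros Hf Hr HN' Hzero Hloss.
  destruct (feasible_elim _ _ _ _ Hf) as (Hb & Hmono & Hp & Hpmono & Hlg).
  assert (Hlm : loss_value (m + r) w = loss_value m w).
  { unfold loss_value; rewrite sumR_zero_tail; [reflexivity |].
    intros i Hi; rewrite Hzero, Ropp_0, powr_le0 by (lra || lia); ring. }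
  destruct (gain_transfer r np (loss_value m w) y Hr ltac:(lia) Hloss Hp Hpmono ltac:(lra))
    as (y' & Hy'0 & Hy'mono & Hy'gain & Hy'sum).
  exists y'; split.
  - apply feasible_intro; auto; intros i Hi; [apply Hb | apply Hmono]; lia.
  - unfold objective; rewrite sumR_zero_tail by (intros i Hi; rewrite Hzero by lia; apply Ropp_0).
    change (fun j => y j) with y; change (fun j => y' j) with y'; lra.
Qed.

Lemma not_at_floor_improvable nm np wm wp i0 :
  is_global_opt N wmin alpha beta lambda Wm Wp nm np wm wp -> (nm + np <= N)%nat ->
  0 < objective nm np wm wp -> (1 <= i0 <= nm)%nat -> wm i0 <> wmin ->
  exists m r y, (m + r = nm)%nat /\ (1 <= m)%nat /\ feas m (r + np) (tail_scale m 0 wm) y /\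
    objective nm np wm wp < objective m (r + np) (tail_scale m 0 wm) y.
Proof.
  intros Hopt HN' HV Hi0 Hne.
  destruct (feasible_elim _ _ _ _ (proj1 Hopt)) as (Hb & _ & Hp & _ & _).
  destruct (dec_inh_nat_subset_has_unique_least_element
              (fun m => (m < nm)%nat /\ wm (S m) <> wmin)) as (m & [(Hm & HwS) Hleast] & _).
  { intros m; destruct (Nat.lt_ge_cases m nm), (Req_dec (wm (S m)) wmin); try tauto; right; lia. }
  { exists (pred i0); split; [lia | replace (S (pred i0)) with i0 by lia; exact Hne]. }
  assert (Hhead : forall i, (1 <= i <= m)%nat -> wm i = wmin).
  { intros i Hi; destruct (Req_dec (wm i) wmin) as [| Hi']; [assumption | exfalso].
    assert (Hle := Hleast (pred i) ltac:(split; [lia | replace (S (pred i)) with i by lia; exact Hi'])).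
    lia. }
  assert (Hc : exists c, feas nm np (tail_scale m 0 wm) (fun j => c * wp j) /\
            objective nm np wm wp <= objective nm np (tail_scale m 0 wm) (fun j => c * wp j)).
  { destruct (Rle_lt_or_eq_dec (wm (S m)) 0 (proj2 (Hb (S m) ltac:(lia)))) as [Hneg | Hzero].
    - apply zero_tail_no_worse_neg; auto; try lia.
      pose proof (proj1 (Hb (S m) ltac:(lia))); lra.
    - exists 1; apply zero_tail_no_worse_zero; auto; [apply Hopt | lia]. }
  destruct Hc as (c & Hfc & Hobj).
  destruct (feasible_elim _ _ _ _ Hfc) as (_ & _ & Hcp & _ & _).
  assert (Hm1 : (1 <= m)%nat).
  { destruct m as [| m]; [exfalso | lia].
    rewrite objective_tail_scale in Hobj by lia; simpl sumR in Hobj.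
    pose proof (sumR_nonneg np _ Hcp); rewrite sumR_scal in *; lra. }
  replace nm with (m + (nm - m))%nat in Hfc by lia.
  destruct (transfer_zero_losses m (nm - m) np (tail_scale m 0 wm) (fun j => c * wp j) Hfc
              ltac:(lia) ltac:(lia)) as (y & Hfy & Hobjy).
  - intros i Hi; unfold tail_scale; destruct (Nat.leb_spec i m); [lia | ring].
  - apply (loss_value_pos _ _ 1); try lia; unfold tail_scale.
    destruct (Nat.leb_spec 1 m); [rewrite Hhead by lia; exact Hwmin | lia].
  - replace (m + (nm - m))%nat with nm in Hobjy by lia.
    exists m, (nm - m)%nat, y; split; [lia | split; [exact Hm1 | split; [exact Hfy | lra]]].
Qed.

End Lottery.

Theorem proposition5 (N : nat) (wmin alpha beta lambda : R) (Wm Wp : R -> R)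
  (HN : (1 <= N)%nat) (Hwmin : wmin < 0)
  (Halpha : 0 < alpha < 1) (Hbeta : 0 < beta < 1) (Hlambda : 0 < lambda)
  (HWm : weighting Wm) (HWp : weighting Wp)
  (Hab : alpha >= beta)
  (nms nps : nat) (Hsum : (nms + nps)%nat = N)
  (Hopt : forall nm np, (nm + np)%nat = N ->
     Rbar_le (Phi N wmin alpha beta lambda Wm Wp nm np)
             (Phi N wmin alpha beta lambda Wm Wp nms nps))
  (Hpos : Rbar_lt (Finite 0) (Phi N wmin alpha beta lambda Wm Wp nms nps))
  (wms wps : nat -> R)
  (Hw : is_global_opt N wmin alpha beta lambda Wm Wp nms nps wms wps) :
  forall i, (1 <= i <= nms)%nat -> wms i = wmin.
Proof.
  intros i0 Hi0; destruct (Req_dec (wms i0) wmin) as [Heq | Hne]; [exact Heq | exfalso].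
  assert (Hnps : (1 <= nps)%nat) by (destruct nps; [destruct nms; simpl in Hpos; lra | lia]).
  pose proof (Phi_le_opt N wmin alpha beta lambda Wm Wp nms nps wms wps ltac:(lia) Hnps Hw) as HPV.
  assert (HV : 0 < objective nms nps wms wps) by exact (Rbar_lt_le_trans _ _ _ Hpos HPV).
  destruct (not_at_floor_improvable N wmin alpha beta lambda Wm Wp Hwmin Halpha (proj1 Hbeta)
              (Rge_le _ _ Hab) Hlambda HWm HWp nms nps wms wps i0 Hw ltac:(lia) HV Hi0 Hne)
    as (m & r & y & Hmr & Hm & Hf & Hlt).
  pose proof (objective_le_Phi N wmin alpha beta lambda Wm Wp m (r + nps) _ _ Hm ltac:(lia) Hf)
    as Hge.
  pose proof (Rbar_le_trans _ _ _ (Rbar_le_trans _ _ _ Hge (Hopt m (r + nps)%nat ltac:(lia))) HPV)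
    as Hcontra.
  simpl in Hcontra; lra.
Qed.
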